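(* Let $R,S\in\mathfrak{D}$ and $\mathfrak{D}'\subseteq\mathfrak{D}$, and let $$\mathfrak{G}_{\mathfrak{D}'}(R)=\{\mathcal{G}(\xi):\xi\in\mathcal{H}(G,R),\ G\in\mathfrak{D}'\}.$$ If $\#\mathcal{S}(G,R)\le\#\mathcal{S}(G,S)$ for all $G\in\mathfrak{G}_{\mathfrak{D}'}(R)$, then $R\sqsubseteq_\Gamma S$ with respect to $\mathfrak{D}'$.
   Context: **Digraphs and homomorphisms.** - A digraph $G$ is a pair $(V(G),A(G))$, where $V(G)$ is a finite non-empty set and $A(G)\subseteq V(G)\times V(G)$. Arcs are written $vw$. - An arc $vw$ with $v\ne w$ is proper. - A homomorphism $\xi:G\to H$ is a map $V(G)\to V(H)$ with $\xi(v)\xi(w)\in A(H)$ for all $vw\in A(G)$. $\mathcal{H}(G,H)$ is the set of homomorphisms. - A homomorphism is strict if it maps every proper arc to a proper arc. $\mathcal{S}(G,H)$ is the set of strict homomorphisms. - $\mathfrak{D}$ is the class of all digraphs. **Connectivity.** - Two vertices $u,w$ are adjacent if $uw\in A(G)$ or $wu\in A(G)$. - For $X\subseteq V(G)$ and $v,w\in X$, the vertices $v$ and $w$ are connected in $X$ if $v=w$, or if there are $z_0=v,\dots,z_I=w$ in $X$ with consecutive terms adjacent. - $\gamma_X(v)$ is the set of $w\in X$ connected to $v$ in $X$. - $\Gamma_\xi(v):=\gamma_{\xi^{-1}(\xi(v))}(v)$. **The quotient digraph.** For $\xi\in\mathcal{H}(G,H)$, $\mathcal{G}(\xi)$ is the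 digraph with: - vertex set $\{\Gamma_\xi(v):v\in V(G)\}$; - arcs $\mathfrak{a}\mathfrak{b}$ whenever there are $a\in\mathfrak{a}$, $b\in\mathfrak{b}$ with $ab\in A(G)$. **Schemes.** - For a class $\mathfrak{D}'$, let $\mathfrak{D}'_r$ be a fixed system of representatives up to isomorphism. - A Hom-scheme from $R$ to $S$ with respect to $\mathfrak{D}'$ is a family of maps $\rho_G:\mathcal{H}(G,R)\to\mathcal{H}(G,S)$, $G\in\mathfrak{D}'_r$. - It is strong if all $\rho_G$ are injective. - It is a $\Gamma$-scheme if $\Gamma_{\rho_G(\xi)}(v)=\Gamma_\xi(v)$ for all $G$, $\xi$ and $v$. - $R\sqsubseteq_\Gamma S$ with respect to $\mathfrak{D}'$ means that a strong $\Gamma$-scheme exists. *)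

From mathcomp Require Import all_boot.
Set Implicit Arguments. Unset Strict Implicit. Unset Printing Implicit Defensive.

Record digraph := Digraph {
  dV : finType;
  dA : rel dV;
  dne : 0 < #|dV| }.

Section Defs.
Variables G H : digraph.

Definition homs : {set {ffun dV G -> dV H}} :=
  [set xi : {ffun dV G -> dV H} | [forall v, forall w, dA v w ==> dA (xi v) (xi w)]].
Definition strict_homs : {set {ffun dV G -> dV H}} :=
  [set xi in homs | [forall v, forall w, (v != w) && dA v w ==> (xi v != xi w)]].

Definition adj_in (X : {set dV G}) : rel (dV G) :=
  fun u w => [&& u \in X, w \in X & dA u w || dA w u].
Definition gamma (X : {set dV G}) (v : dV G) : {set dV G} :=
  [set w in X | connect (adj_in X) v w].

Definition fiber (xi : dV G -> dV H) (v : dV G) : {set dV G} :=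
  [set w | xi w == xi v].
Definition Gam (xi : dV G -> dV H) (v : dV G) : {set dV G} :=
  gamma (fiber xi v) v.

Definition qverts (xi : dV G -> dV H) : {set {set dV G}} :=
  [set Gam xi v | v in [set: dV G]].
Definition qV (xi : dV G -> dV H) : finType :=
  {X : {set dV G} | X \in qverts xi}.
Definition qA (xi : dV G -> dV H) : rel (qV xi) :=
  fun X Y => [exists a in val X, exists b in val Y, dA a b].

Lemma qV_ne (xi : dV G -> dV H) : 0 < #|qV xi|.
Proof.
have /card_gt0P [v _] := dne G.
apply/card_gt0P.
exists (exist (fun X => X \in qverts xi) (Gam xi v) (imset_f _ (in_setT v))).
by [].
Qed.

Definition quot (xi : dV G -> dV H) : digraph := @Digraph (qV xi) (@qA xi) (qV_ne xi).

Definition iso : Prop :=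
  exists f : dV G -> dV H, bijective f /\ forall u v, dA u v = dA (f u) (f v).
End Defs.

Definition rep_system (D' Dr : digraph -> Prop) : Prop :=
  [/\ forall G, Dr G -> D' G,
      forall G, D' G -> exists2 G', Dr G' & iso G G' &
      forall G G', Dr G -> Dr G' -> iso G G' -> G = G'].

Definition strong_Gamma_scheme (Dr : digraph -> Prop) (R S : digraph)
  (rho : forall G : digraph, {ffun dV G -> dV R} -> {ffun dV G -> dV S}) : Prop :=
  forall G, Dr G ->
    [/\ forall xi, xi \in homs G R -> rho G xi \in homs G S,
        {in homs G R &, injective (rho G)} &
        forall xi, xi \in homs G R -> forall v, Gam (rho G xi) v = Gam xi v].

Definition Gamma_sub (Dr : digraph -> Prop) (R S : digraph) : Prop :=
  exists rho, @strong_Gamma_scheme Dr R S rho.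

From mathcomp Require Import all_boot.
Set Implicit Arguments. Unset Strict Implicit. Unset Printing Implicit Defensive.

(* For a homomorphism xi : G -> H, the blocks Gam xi v partition
   V(G), and the quotient digraph G(xi) has these blocks as vertices.  For any
   digraph T, the homomorphisms G -> T whose block partition equals that of a
   fixed K : G -> H correspond to the strict homomorphisms G(K) -> T: a strict
   homomorphism tau is lifted to tau o proj (which has the same blocks as K),
   and a homomorphism with the blocks of K descends to G(K).
     To build the scheme rho_G we pick, for each partition realised by some
   xi in H(G,R), one canonical representative K = canon xi with that partition;
   the hypothesis gives #S(G(K),R) <= #S(G(K),S), so there is an injection
   S(G(K),R) -> S(G(K),S).  rho_G(xi) descends xi to G(K), applies this
   injection and lifts back to G.  It is a homomorphism with the same blocks as
   xi, and it is injective because the blocks, hence K, are recovered from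
   rho_G(xi), and descent, the injection and lifting are all injective. *)

Definition embed (T U : finType) (A : {set T}) (B : {set U}) (u0 : U) (x : T) : U :=
  nth u0 (enum B) (index x (enum A)).

Lemma embed_index_lt (T U : finType) (A : {set T}) (B : {set U}) x :
  #|A| <= #|B| -> x \in A -> index x (enum A) < size (enum B).
Proof. by move=> le xA; rewrite -cardE; apply: leq_trans le; rewrite cardE index_mem mem_enum. Qed.

Lemma embed_in (T U : finType) (A : {set T}) (B : {set U}) u0 :
  #|A| <= #|B| -> {in A, forall x, embed A B u0 x \in B}.
Proof. by move=> le x xA; rewrite /embed -mem_enum mem_nth // embed_index_lt. Qed.

Lemma embed_inj (T U : finType) (A : {set T}) (B : {set U}) u0 :
  #|A| <= #|B| -> {in A &, injective (embed A B u0)}.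
Proof.
move=> le x y xA yA /eqP; rewrite /embed.
rewrite (nth_uniq u0 (embed_index_lt le xA) (embed_index_lt le yA) (enum_uniq _)).
by move=> /eqP /(congr1 (nth x (enum A))); rewrite !nth_index ?mem_enum.
Qed.

Lemma connect_invariant (T : finType) (e : rel T) (P : pred T) x y :
  connect e x y -> P x -> (forall a b, P a -> e a b -> P b) -> P y.
Proof.
move=> /connectP [p pth ->] Px step.
elim: p x pth Px => [|b p IH] x //= /andP [exb pth] Px.
exact: IH pth (step _ _ Px exb).
Qed.

Lemma homsP (G H : digraph) (f : {ffun dV G -> dV H}) :
  reflect (forall v w, dA v w -> dA (f v) (f w)) (f \in homs G H).
Proof.
rewrite inE; apply: (iffP forallP) => h.
- by move=> v w vw; move/forallP/(_ w)/implyP: (h v); apply.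
- by move=> v; apply/forallP => w; apply/implyP; apply: h.
Qed.

Lemma strict_homsP (G H : digraph) (f : {ffun dV G -> dV H}) :
  reflect ((forall v w, dA v w -> dA (f v) (f w)) /\
           (forall v w, v != w -> dA v w -> f v != f w)) (f \in strict_homs G H).
Proof.
rewrite inE; apply: (iffP andP) => [[/homsP hom /forallP sep]|[hom sep]].
- split=> // v w vw avw; move/forallP/(_ w)/implyP: (sep v); apply.
  by rewrite vw avw.
- split; first exact/homsP.
  apply/forallP => v; apply/forallP => w; apply/implyP => /andP [vw avw].
  exact: sep.
Qed.

Section Blocks.
Variables (G H : digraph) (xi : dV G -> dV H).

Lemma adj_in_sym (X : {set dV G}) : symmetric (adj_in X).
Proof. by move=> u w; rewrite /adj_in andbCA orbC. Qed.

Lemma mem_Gam v w :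
  (w \in Gam xi v) = (xi w == xi v) && connect (adj_in (fiber xi v)) v w.
Proof. by rewrite !inE. Qed.

Lemma Gam_self v : v \in Gam xi v.
Proof. by rewrite mem_Gam eqxx connect0. Qed.

Lemma Gam_fiber v w : w \in Gam xi v -> xi w = xi v.
Proof. by rewrite mem_Gam => /andP [/eqP]. Qed.

Lemma Gam_eq v w : w \in Gam xi v -> Gam xi w = Gam xi v.
Proof.
move=> wv; have xiw := Gam_fiber wv; move: wv.
rewrite mem_Gam /Gam /fiber xiw => /andP [_ vw].
apply/setP=> u; rewrite !inE; congr (_ && _); apply/idP/idP => [wu|vu].
- exact: connect_trans vw wu.
- by apply: connect_trans vu; rewrite (sym_connect_sym (@adj_in_sym _)).
Qed.

Lemma Gam_step v a b :
  a \in Gam xi v -> xi b = xi a -> dA a b || dA b a -> b \in Gam xi v.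
Proof.
rewrite !mem_Gam => /andP [/eqP xia va] xib ab.
rewrite xib xia eqxx; apply: connect_trans va (connect1 _).
by rewrite /adj_in !inE xib xia eqxx ab.
Qed.

End Blocks.

Lemma Gam_same (G H K : digraph) (xi : dV G -> dV H) (phi : dV G -> dV K) :
  (forall v w, w \in Gam xi v -> phi w = phi v) ->
  (forall a b, dA a b -> Gam xi a != Gam xi b -> phi a != phi b) ->
  forall v, Gam phi v = Gam xi v.
Proof.
move=> const sep v; apply/setP => w; apply/idP/idP.
- rewrite mem_Gam => /andP [_ vw].
  apply: (connect_invariant vw (Gam_self _ _)) => a b av.
  rewrite /adj_in !inE => /and3P [/eqP phia /eqP phib ab].
  apply/contraT => bv; have ab_blocks : Gam xi a != Gam xi b.
    by rewrite (Gam_eq av); apply: contra bv => /eqP ->; apply: Gam_self.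
  case/orP: ab => [ab|ba].
  + by move: (sep _ _ ab ab_blocks); rewrite phia phib eqxx.
  + by move: (sep _ _ ba); rewrite eq_sym ab_blocks phia phib eqxx => /(_ isT).
- rewrite mem_Gam => /andP [_ vw].
  pose in_both a := (a \in Gam xi v) && (a \in Gam phi v).
  suff /andP [] : in_both w by [].
  apply: (@connect_invariant _ _ in_both _ _ vw); first by rewrite /in_both !Gam_self.
  move=> a b /andP [axi aphi]; rewrite /adj_in !inE => /and3P [/eqP xia /eqP xib ab].
  have bxi : b \in Gam xi v by apply: Gam_step axi _ ab; rewrite xia xib.
  rewrite /in_both bxi; apply: Gam_step aphi _ ab.
  by rewrite (const _ _ axi) (const _ _ bxi).
Qed.

Lemma Gam_kernel (G H H' : digraph) (f : dV G -> dV H) (g : dV G -> dV H') :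
  (forall v w, (f v == f w) = (g v == g w)) -> forall v, Gam f v = Gam g v.
Proof. by move=> e v; rewrite /Gam /fiber; congr gamma; apply/setP => w; rewrite !inE e. Qed.

Section Quotient.
Variables (G H : digraph) (K : dV G -> dV H).

Definition proj (v : dV G) : qV K :=
  exist (fun X => X \in qverts K) (Gam K v) (imset_f _ (in_setT v)).

Lemma proj_surj (X : qV K) : exists v, X = proj v.
Proof.
case: X => X XK; have /imsetP [v _ XE] := XK.
by exists v; apply: val_inj.
Qed.

Lemma proj_eq v w : (proj v == proj w) = (Gam K v == Gam K w).
Proof. by []. Qed.

Lemma qA_proj a b : dA a b -> qA (proj a) (proj b).
Proof.
move=> ab; apply/existsP; exists a; rewrite Gam_self /=.
by apply/existsP; exists b; rewrite Gam_self.
Qed.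

Lemma qA_projP v w :
  qA (proj v) (proj w) -> exists a b, [/\ a \in Gam K v, b \in Gam K w & dA a b].
Proof. by move=> /existsP [a /andP [av /existsP [b /andP [bw ab]]]]; exists a, b. Qed.

Definition qlift (T : digraph) (tau : {ffun qV K -> dV T}) : {ffun dV G -> dV T} :=
  [ffun v => tau (proj v)].

Lemma qlift_inj (T : digraph) : injective (@qlift T).
Proof.
move=> tau1 tau2 e; apply/ffunP => X; have [v ->] := proj_surj X.
by move/ffunP/(_ v): e; rewrite !ffunE.
Qed.

Lemma qlift_hom (T : digraph) (tau : {ffun qV K -> dV T}) :
  tau \in strict_homs (quot K) T -> qlift tau \in homs G T.
Proof.
by move=> /strict_homsP [hom _]; apply/homsP => v w vw; rewrite !ffunE; apply/hom/qA_proj.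
Qed.

Lemma qlift_Gam (T : digraph) (tau : {ffun qV K -> dV T}) :
  tau \in strict_homs (quot K) T -> forall v, Gam (qlift tau) v = Gam K v.
Proof.
move=> /strict_homsP [_ sep] v.
rewrite (@Gam_kernel _ _ _ _ (fun v => tau (proj v))); last by move=> ? ?; rewrite !ffunE.
apply: Gam_same => [x y yx | a b ab ne].
- by congr (tau _); apply/eqP; rewrite proj_eq (Gam_eq yx).
- by apply: sep; [rewrite proj_eq | apply: qA_proj].
Qed.

Definition descend (T : digraph) (t0 : dV T) (xi : dV G -> dV T) : {ffun qV K -> dV T} :=
  [ffun X : qV K => odflt t0 (omap xi [pick x in val X])].

Section Descend.
Variables (T : digraph) (t0 : dV T) (xi : {ffun dV G -> dV T}).
Hypothesis same_blocks : forall v, Gam K v = Gam xi v.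

Lemma descend_proj v : descend t0 xi (proj v) = xi v.
Proof.
rewrite ffunE /=; case: pickP => [x|] /=; first by rewrite same_blocks => /Gam_fiber.
by move=> /(_ v); rewrite Gam_self.
Qed.

Lemma qlift_descend : qlift (descend t0 xi) = xi.
Proof. by apply/ffunP => v; rewrite ffunE descend_proj. Qed.

Lemma descend_strict : xi \in homs G T -> descend t0 xi \in strict_homs (quot K) T.
Proof.
move=> /homsP hom; apply/strict_homsP; split=> X Y.
all: have [v ->] := proj_surj X; have [w ->] := proj_surj Y.
- move=> /qA_projP [a [b [av bw ab]]]; rewrite !descend_proj.
  move: av bw; rewrite !same_blocks => av bw.
  by rewrite -(Gam_fiber av) -(Gam_fiber bw); apply: hom.
- rewrite proj_eq !same_blocks => vw /qA_projP [a [b [av bw ab]]].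
  rewrite !descend_proj; move: av bw; rewrite !same_blocks => av bw.
  rewrite -(Gam_fiber av) -(Gam_fiber bw); apply: contra vw => /eqP xiab.
  have ba : b \in Gam xi a by apply: Gam_step (Gam_self _ _) _ _; rewrite // ab.
  by rewrite -(Gam_eq av) -(Gam_eq bw) (Gam_eq ba).
Qed.

End Descend.
End Quotient.

Definition canon (G R : digraph) (xi : {ffun dV G -> dV R}) : {ffun dV G -> dV R} :=
  odflt xi [pick x in homs G R | [forall v, Gam x v == Gam xi v]].

Lemma canon_spec (G R : digraph) (xi : {ffun dV G -> dV R}) :
  xi \in homs G R -> canon xi \in homs G R /\ forall v, Gam (canon xi) v = Gam xi v.
Proof.
by move=> xiR; rewrite /canon; case: pickP => [x /andP [xR /forallP e]|] //=; split=> // v; apply/eqP.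
Qed.

Lemma canon_eq (G R : digraph) (x1 x2 : {ffun dV G -> dV R}) :
  x1 \in homs G R -> (forall v, Gam x1 v = Gam x2 v) -> canon x1 = canon x2.
Proof.
move=> x1R e; rewrite /canon.
have -> : [pick x in homs G R | [forall v, Gam x v == Gam x2 v]] =
          [pick x in homs G R | [forall v, Gam x v == Gam x1 v]].
  by apply: eq_pick => x /=; congr (_ && _); apply: eq_forallb => v; rewrite e.
case: pickP => [//|] /(_ x1); rewrite /= x1R.
by have -> : [forall v, Gam x1 v == Gam x1 v] by apply/forallP.
Qed.

Section Scheme.
Variables (R S : digraph) (r0 : dV R) (s0 : dV S) (G : digraph).

Definition transfer (xi : {ffun dV G -> dV R}) :
  {ffun qV (canon xi) -> dV R} -> {ffun qV (canon xi) -> dV S} :=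
  embed (strict_homs (quot (canon xi)) R) (strict_homs (quot (canon xi)) S) [ffun _ => s0].

Definition rho (xi : {ffun dV G -> dV R}) : {ffun dV G -> dV S} :=
  qlift (transfer (descend (canon xi) r0 xi)).

Hypothesis card_le : forall xi, xi \in homs G R ->
  #|strict_homs (quot xi) R| <= #|strict_homs (quot xi) S|.

Lemma descend_canon_strict xi : xi \in homs G R ->
  descend (canon xi) r0 xi \in strict_homs (quot (canon xi)) R.
Proof. by move=> xiR; have [_ blocks] := canon_spec xiR; exact: descend_strict blocks xiR. Qed.

Lemma card_le_canon xi : xi \in homs G R ->
  #|strict_homs (quot (canon xi)) R| <= #|strict_homs (quot (canon xi)) S|.
Proof. by move=> xiR; have [canonR _] := canon_spec xiR; exact: card_le canonR. Qed.

Lemma transfer_strict xi : xi \in homs G R ->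
  transfer (descend (canon xi) r0 xi) \in strict_homs (quot (canon xi)) S.
Proof. by move=> xiR; apply: embed_in (card_le_canon xiR) _ (descend_canon_strict xiR). Qed.

Lemma rho_hom xi : xi \in homs G R -> rho xi \in homs G S.
Proof. by move=> xiR; apply/qlift_hom/transfer_strict. Qed.

Lemma rho_Gam xi : xi \in homs G R -> forall v, Gam (rho xi) v = Gam xi v.
Proof.
by move=> xiR v; rewrite qlift_Gam ?transfer_strict //; have [_ ->] := canon_spec xiR.
Qed.

(* rho xi determines the blocks of xi, hence canon xi; the transferred
   descent is then determined, and so is xi itself. *)
Lemma rho_inj : {in homs G R &, injective rho}.
Proof.
move=> x1 x2 x1R x2R e.
have blocks v : Gam x1 v = Gam x2 v by rewrite -rho_Gam // e rho_Gam.
have [_ canon2] := canon_spec x2R.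
have d1 := descend_canon_strict x1R; have d2 := descend_canon_strict x2R.
move: e d1; rewrite /rho /transfer (canon_eq x1R blocks) => /qlift_inj e d1.
have := embed_inj (card_le_canon x2R) d1 d2 e.
have blocks1 v : Gam (canon x2) v = Gam x1 v by rewrite canon2 blocks.
by move=> /(congr1 (@qlift _ _ (canon x2) R)); rewrite (qlift_descend r0 blocks1) (qlift_descend r0 canon2).
Qed.

End Scheme.

Theorem lemma4 (R S : digraph) (D' Dr : digraph -> Prop) :
  rep_system D' Dr ->
  (forall (G : digraph) (xi : {ffun dV G -> dV R}), D' G -> xi \in homs G R ->
     #|strict_homs (quot xi) R| <= #|strict_homs (quot xi) S|) ->
  Gamma_sub Dr R S.
Proof.
move=> [DrD' _ _] card_le.
have /card_gt0P [r0 _] := dne R.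
have /card_gt0P [s0 _] := dne S.
exists (rho r0 s0) => G DrG; have card_le_G := card_le G _ (DrD' _ DrG).
split.
- exact: rho_hom.
- exact: rho_inj.
- exact: rho_Gam.
Qed.
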